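(* Let $\Bbbk$ be a field of characteristic zero, $n,r$ positive integers, $\varepsilon\in\{0,1/2\}$, $d=n-2\varepsilon$, and assume $d>r+1$. Regard $\mathbf V^{\otimes r}$ as a $\Bbbk W_d$-module via $\Phi_{n,r+\varepsilon}$. Then the set of partitions $\lambda\vdash d$ with $[\mathbf V^{\otimes r}:S^\lambda]\neq0$ is contained in $\{\lambda\vdash d\mid\lambda\trianglerighteq(d-r,1^r)\}$. Hence $\ker\Phi_{n,r+\varepsilon}$ contains an isomorphic copy of $\bigoplus_{\lambda\vdash d,\ \lambda\not\trianglerighteq(d-r,1^r)}\operatorname{End}_\Bbbk(S^\lambda)$.
   Context: $\mathbf V$ is a free $\Bbbk$-module with basis $\mathbf v_1,\dots,\mathbf v_n$. $W_n$ is the symmetric group on $\{1,\dots,n\}$ acting on $\mathbf V^{\otimes r}$ by $w(\mathbf v_{j_1}\otimes\cdots\otimes\mathbf v_{j_r})=\mathbf v_{w(j_1)}\otimes\cdots\otimes\mathbf v_{w(j_r)}$, giving $\Phi_{n,r}:\Bbbk W_n\to\operatorname{End}_\Bbbk(\mathbf V^{\otimes r})$; $W_{n-1}=\{w:w(n)=n\}$ acts on $\mathbf V^{\otimes r}\otimes\mathbf v_n\subset\mathbf V^{\otimes(r+1)}$, identified with $\mathbf V^{\otimes r}$, giving $\Phi_{n,r+1/2}:\Bbbk W_{n-1}\to\operatorname{End}_\Bbbk(\mathbf V^{\otimes r})$. $S^\lambda$ is the (irreducible) Specht module of $W_d$ indexed by $\lambda$, $[M:S]$ the composition multiplicity, and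 $\Bbbk W_d\cong\bigoplus_{\mu\vdash d}\operatorname{End}_\Bbbk(S^\mu)$ the Wedderburn decomposition. $\trianglerighteq$ is the dominance order. *)

From HB Require Import structures.
From mathcomp Require Import all_boot all_algebra all_fingroup.
From mathcomp Require Import mxrepresentation.
Set Implicit Arguments. Unset Strict Implicit. Unset Printing Implicit Defensive.
Import GRing.Theory.
Local Open Scope ring_scope.

(* (MathComp matrices act on row vectors from the right.)                   *)
Section PermRep.
Variables (F : fieldType) (gT : finGroupType) (X : finType).
Variable to : X -> gT -> X.
Hypothesis to1 : forall x, to x 1%g = x.
Hypothesis toM : forall x g h, to x (g * h)%g = to (to x g) h.

Definition basvec (x : X) : 'rV[F]_#|X| := \row_k (enum_val k == x)%:R.

Definition permrep_mx (g : gT) : 'M[F]_#|X| :=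
  \matrix_(i, j) (to (enum_val i) g == enum_val j)%:R.

Lemma permrep_mx_repr : mx_repr [set: gT] permrep_mx.
Proof.
split.
  apply/matrixP=> i j; rewrite !mxE to1 (inj_eq enum_val_inj).
  by case: eqP.
move=> x y _ _; apply/matrixP=> i k; rewrite !mxE.
rewrite (bigD1 (enum_rank (to (enum_val i) x))) //= !mxE enum_rankK eqxx mul1r.
rewrite big1 ?addr0 ?toM // => j /negbTE nj; rewrite !mxE.
have -> : (to (enum_val i) x == enum_val j) = false.
  by apply/negbTE/eqP=> e; move: nj; rewrite e enum_valK eqxx.
by rewrite mul0r.
Qed.

Definition permrep := MxRepresentation permrep_mx_repr.
End PermRep.

Definition is_partition (d : nat) (la : seq nat) : bool :=
  [&& sorted geq la, all (fun x => 0 < x)%N la & sumn la == d].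

Definition dominates (la mu : seq nat) : Prop :=
  forall k : nat, (sumn (take k mu) <= sumn (take k la))%N.

Definition hook (d r : nat) : seq nat := (d - r)%N :: nseq r 1%N.

(* Tabloids of shape la are encoded as functions 'I_d -> 'I_d.+1 mapping an  *)
(* entry to the index of its row.  The permutation module on all such       *)
(* functions contains M^la (the span of tabloids of shape la).              *)
(* The canonical tableau t_la has entries 0..d-1 filled row by row; the     *)
(* tableau s.t_la (for s : 'S_d) has entry s j in the cell of j.             *)
Section Specht.
Variables (F : fieldType) (d : nat).

Definition tabloid_set := {ffun 'I_d -> 'I_d.+1}.

(* left action  s . {t} = {s t}, written as a right action of 'S_d *)
Definition tab_act (f : tabloid_set) (s : 'S_d) : tabloid_set :=
  [ffun x => f (s^-1 x)%g].

Lemma tab_act1 f : tab_act f 1%g = f.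
Proof. by apply/ffunP=> x; rewrite !ffunE invg1 perm1. Qed.

Lemma tab_actM f g h : tab_act f (g * h)%g = tab_act (tab_act f g) h.
Proof. by apply/ffunP=> x; rewrite !ffunE invMg permM. Qed.

Definition tabloid_repr := permrep F tab_act1 tab_actM.

(* row and column (0-based) of entry j in the canonical tableau of shape la *)
Definition rowof (la : seq nat) (j : nat) : nat :=
  count (fun i => sumn (take i.+1 la) <= j)%N (iota 0 (size la)).
Definition colof (la : seq nat) (j : nat) : nat :=
  (j - sumn (take (rowof la j) la))%N.

(* the tabloid {s . t_la} *)
Definition tabloid_of (la : seq nat) (s : 'S_d) : tabloid_set :=
  [ffun x => inord (rowof la (s^-1 x)%g)].

Definition colstab (la : seq nat) : {set 'S_d} :=
  [set t : 'S_d | [forall x : 'I_d, colof la (t x) == colof la x]].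

Definition polytabloid (la : seq nat) : 'rV[F]_#|tabloid_set| :=
  \sum_(t in colstab la) (-1) ^+ odd_perm t *: basvec F (tabloid_of la t).

(* The Specht module S^la: the submodule of the permutation module spanned
   by the polytabloids, i.e. generated by the polytabloid e_(t_la). *)
Definition Specht_mx (la : seq nat) := cyclic_mx tabloid_repr (polytabloid la).

Definition Specht_module (la : seq nat) : mxmodule tabloid_repr (Specht_mx la) :=
  cyclic_mx_module tabloid_repr (polytabloid la).

Definition Specht (la : seq nat) := submod_repr (Specht_module la).
End Specht.

(* The representation Phi_{n, r + eps} on V^{(x) r}, V = k^n, eps = 0 or 1/2 *)
(* (encoded as a boolean: eps = false for 0, eps = true for 1/2), of         *)
(* W_d = 'S_d with d = n - 2 eps.  For eps = 1/2, W_(n-1) is identified with *)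
(* the permutations of {1..n} fixing n, i.e. 'S_(n-1) acting on 'I_n by      *)
(* fixing the last point.  The basis of V^{(x) r} is indexed by functions    *)
(* j : 'I_r -> 'I_n, and w (v_(j_1) (x) ... (x) v_(j_r)) = v_(w j_1) (x) ... *)
Section Tensor.
Variables (F : fieldType) (n r : nat) (eps : bool).

Local Notation d := (n - eps)%N.

Definition ext_perm (g : 'S_d) (i : 'I_n) : 'I_n :=
  if insub (val i) is Some i' then widen_ord (leq_subr eps n) (g i') else i.

Lemma ext_perm1 i : ext_perm 1%g i = i.
Proof.
rewrite /ext_perm; case: insubP => [i' _ Hi|_] //.
by rewrite perm1; apply: val_inj; rewrite /= Hi.
Qed.

Lemma ext_permM g h i : ext_perm (g * h)%g i = ext_perm h (ext_perm g i).
Proof.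
rewrite /ext_perm; case: insubP => [i' _ _|/negbTE Hi].
  rewrite insubT ?ltn_ord //= => Hlt; rewrite permM; congr widen_ord.
  by congr (h _); apply: val_inj.
by rewrite insubF.
Qed.

Definition tensor_index := {ffun 'I_r -> 'I_n}.

Definition tensor_act (f : tensor_index) (g : 'S_d) : tensor_index :=
  [ffun k => ext_perm g (f k)].

Lemma tensor_act1 f : tensor_act f 1%g = f.
Proof. by apply/ffunP=> k; rewrite !ffunE ext_perm1. Qed.

Lemma tensor_actM f g h : tensor_act f (g * h)%g = tensor_act (tensor_act f g) h.
Proof. by apply/ffunP=> k; rewrite !ffunE ext_permM. Qed.

Definition Phi := permrep F tensor_act1 tensor_actM.
End Tensor.

(* [M : S] <> 0 : S is similar to a composition factor of M, i.e. to one of *)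
(* the factors of a composition series of the full module M.                *)
Definition comp_mult_nz (F : fieldType) (gT : finGroupType) (G : {group gT})
    (m : nat) (rM : mx_representation F G m)
    (k : nat) (rS : mx_representation F G k) : Prop :=
  exists (Us : seq 'M[F]_m) (cUs : mx_composition_series rM Us),
    (1%:M <= last 0 Us)%MS /\
    exists2 i : nat, (i < size Us)%N & mx_rsim (series_repr i cUs) rS.

From HB Require Import structures.
From mathcomp Require Import all_boot all_algebra all_fingroup.
From mathcomp Require Import mxrepresentation pgroup zify.
Set Implicit Arguments. Unset Strict Implicit. Unset Printing Implicit Defensive.
Import GRing.Theory.

(* Let C_f be the stabiliser in W_d of the basis tensor v_f and B_f the sum of
   C_f in the group algebra. As v_f B_f = |C_f| v_f, an element A with
   B_f A = 0 for all f acts by 0 on V^{(x) r}. If la_1 < d - r, then more than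
   la_1 letters do not occur in f, so two of them share a column of t_la and
   their transposition s is odd and lies in C_f and in the column stabiliser:
   e_t B_f = e_t s B_f = - e_t B_f = 0. Since x C_f x^-1 = C_(f x^-1), B_f also
   kills every e_t x, hence all of S^la and the Wedderburn block End(S^la),
   which therefore lies in the kernel of Phi. The idempotent of that block acts
   as the identity on S^la, so S^la is not a composition factor either. Finally
   la_1 >= d - r means exactly that la dominates (d - r, 1^r). *)

Lemma rowof_cons a l j :
  rowof (a :: l) j = if (a <= j)%N then (rowof l (j - a)).+1 else 0%N.
Proof.
rewrite /rowof /= take0 addn0 -[1%N]addn0 iotaDl count_map.
case: leqP => [le_a_j | lt_j_a].
  rewrite add1n; congr _.+1.
  by apply: eq_count => i /=; rewrite add1n -leq_subRL.
rewrite add0n (@eq_count _ _ pred0) ?count_pred0 // => i /=.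
by apply/negbTE; rewrite -ltnNge (leq_trans lt_j_a) // leq_addr.
Qed.

Lemma colof_cons a l j :
  colof (a :: l) j = if (a <= j)%N then colof l (j - a) else j.
Proof.
rewrite /colof rowof_cons; case: leqP => /= _; first by rewrite subnDA.
by rewrite subn0.
Qed.

Lemma colof_lt_head la j :
  sorted geq la -> (j < sumn la)%N -> (colof la j < head 0%N la)%N.
Proof.
elim: la j => [|a l IHl] j //= sorted_al lt_j; rewrite colof_cons.
case: (leqP a j) => [le_a_j|] //; move: sorted_al lt_j IHl.
case: l => [|b l] /= => [_|/andP[le_b_a sorted_bl]] lt_j IHl.
  by move: lt_j; rewrite addn0 ltnNge le_a_j.
by apply: leq_trans (IHl _ sorted_bl _) le_b_a; rewrite ltn_subLR.
Qed.

Lemma sumn_take_nseq1 k r : sumn (take k (nseq r 1%N)) = minn k r.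
Proof. by elim: r k => [|r IHr] [|k] //=; rewrite ?IHr; lia. Qed.

Lemma minn_sumn_take l k :
  all (fun x => 0 < x)%N l -> (minn (sumn l) k <= sumn (take k l))%N.
Proof.
elim: l k => [|b l IHl] [|k] //= /andP[b_gt0 /(IHl k)]; lia.
Qed.

Lemma dominates_hook d r la : is_partition d la -> (r <= d)%N ->
  (d - r <= head 0%N la)%N -> dominates la (hook d r).
Proof.
case/and3P=> _ la_pos /eqP sum_la le_r_d; move: la_pos sum_la.
case: la => [_ | a l /andP[_ l_pos]] /= sum_la le_head [|k] //=.
  by move: le_r_d; rewrite -sum_la leqn0 => /eqP ->.
rewrite sumn_take_nseq1; have := minn_sumn_take k l_pos; lia.
Qed.

Lemma leq_card_in_seq (T : finType) (U : eqType) (g : T -> U) (A : {pred T})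
    (s : seq U) :
  {in A &, injective g} -> {in A, forall x, g x \in s} -> (#|A| <= size s)%N.
Proof.
move=> inj_g gAs; rewrite cardE -(size_map g); apply: uniq_leq_size.
  rewrite map_inj_in_uniq ?enum_uniq // => x y.
  by rewrite !mem_enum; apply: inj_g.
by move=> _ /mapP[x Ax ->]; apply: gAs; rewrite -mem_enum.
Qed.

Section GroupRingOp.
Local Open Scope group_scope.
Local Open Scope ring_scope.
Local Open Scope group_ring_scope.
Variables (F : fieldType) (gT : finGroupType) (G : {group gT}).
Local Notation R_G := (group_ring F G).
Local Notation aG := (regular_repr F G).

Definition regular_sum (H : {set gT}) : 'M[F]_#|G| := \sum_(h in H) aG h.

Lemma regular_sum_gring (H : {set gT}) :
  H \subset G -> (regular_sum H \in R_G)%MS.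
Proof.
move=> sHG; rewrite linear_sum summx_sub // => h Hh.
by rewrite envelop_mx_id // (subsetP sHG).
Qed.

Lemma gring_op_regular_sum m (rG : mx_representation F G m) (H : {set gT}) :
  H \subset G -> gring_op rG (regular_sum H) = \sum_(h in H) rG h.
Proof.
move=> sHG; rewrite linear_sum /=; apply: eq_bigr => h Hh.
exact/gring_opG/(subsetP sHG).
Qed.

Lemma gring_op_sandwich m1 m2 (r1 : mx_representation F G m1)
    (r2 : mx_representation F G m2) (P : 'M_(m1, m2)) (Q : 'M_(m2, m1)) A :
  {in G, forall x, r1 x = P *m r2 x *m Q} -> (A \in R_G)%MS ->
  gring_op r1 A = P *m gring_op r2 A *m Q.
Proof.
move=> r12 /envelop_mxP[a ->]; rewrite !linear_sum /= mulmx_suml.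
apply: eq_bigr => x Gx; rewrite !linearZ /= !gring_opG // r12 //.
by rewrite scalemxAl.
Qed.

Lemma mx_rsim_gring_op0 m1 m2 (r1 : mx_representation F G m1)
    (r2 : mx_representation F G m2) A :
  mx_rsim r1 r2 -> (A \in R_G)%MS -> gring_op r2 A = 0 -> gring_op r1 A = 0.
Proof.
case/mx_rsim_def=> B [B' _ r12] RA op0.
by rewrite (gring_op_sandwich r12 RA) op0 mulmx0 mul0mx.
Qed.

Lemma submod_gring_op0 m (rG : mx_representation F G m) U
    (modU : mxmodule rG U) A :
  (A \in R_G)%MS -> U *m gring_op rG A = 0 ->
  gring_op (submod_repr modU) A = 0.
Proof.
move=> RA UA0; set V := @val_submod F m U _ 1%:M.
rewrite (@gring_op_sandwich _ _ _ rG V (in_submod U 1%:M)) //; last first.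
  by move=> x Gx; rewrite /= /submod_mx in_submodE.
suff -> : V *m gring_op rG A = 0 by rewrite mul0mx.
by apply/eqP; rewrite -submx0 -UA0 submxMr // val_submod1.
Qed.

Lemma factmod_gring_op0 m (rG : mx_representation F G m) U
    (modU : mxmodule rG U) A :
  (A \in R_G)%MS -> gring_op rG A = 0 -> gring_op (factmod_repr modU) A = 0.
Proof.
move=> RA op0; rewrite (@gring_op_sandwich _ _ _ rG (val_factmod 1%:M)
  (in_factmod U 1%:M)) ?op0 ?mulmx0 ?mul0mx // => x Gx.
by rewrite /= /factmod_mx in_factmodE.
Qed.

Lemma series_gring_op0 m (rG : mx_representation F G m) Us
    (cUs : mx_composition_series rG Us) k A :
  (A \in R_G)%MS -> gring_op rG A = 0 -> gring_op (series_repr k cUs) A = 0.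
Proof.
move=> RA op0; apply: submod_gring_op0 => //.
by rewrite factmod_gring_op0 ?mulmx0.
Qed.

Lemma Wedderburn_subring_gring (sG : irrType F G) (i : sG) A :
  (A \in 'R_i)%MS -> (A \in R_G)%MS.
Proof. by rewrite genmxE mem_sub_gring => /andP[]. Qed.

Lemma repr_mx_sum_group m (rG : mx_representation F G m) (H : {group gT}) s :
  H \subset G -> s \in H -> rG s *m (\sum_(h in H) rG h) = \sum_(h in H) rG h.
Proof.
move=> sHG Hs; rewrite mulmx_sumr [RHS](reindex_inj (mulgI s)) /=.
apply: eq_big => [h | h Hh]; first by rewrite groupMl.
by rewrite repr_mxM // (subsetP sHG).
Qed.

Lemma repr_mx_sum_conj m (rG : mx_representation F G m) (H : {set gT}) x :
  H \subset G -> x \in G ->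
  rG x *m (\sum_(h in H) rG h) = (\sum_(h in (H :^ x^-1)%g) rG h) *m rG x.
Proof.
move=> sHG Gx; rewrite mulmx_sumr mulmx_suml.
rewrite [RHS](reindex_inj (conjg_inj x^-1)%g) /=.
apply: eq_big => [h | h Hh]; first by rewrite memJ_conjg.
have Gh := subsetP sHG h Hh.
by rewrite -!repr_mxM ?groupJ ?groupV // conjgE invgK mulgA mulgKV.
Qed.

Section Wedderburn.
Hypothesis F'G : [pchar F]^'.-group G.
Variable sG : irrType F G.

Lemma Wedderburn_subring_mulmx0 (i : sG) B A :
  (B \in R_G)%MS -> gring_op (irr_repr i) B = 0 -> (A \in 'R_i)%MS ->
  B *m A = 0.
Proof.
move=> RB opB0 RiA.
have RiBA : (B *m A \in 'R_i)%MS.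
  case/andP: (Wedderburn_ideal i) => idealRi _; apply: submx_trans idealRi.
  exact: mem_mulsmx.
have := regular_op_inj_pchar (sG := sG) F'G (socle_irr i).
rewrite irr_reprK_pchar //.
apply; rewrite ?inE ?linear0 ?sub0mx //.
by rewrite gring_opM ?opB0 ?mul0mx // (Wedderburn_subring_gring RiA).
Qed.

Lemma series_Wedderburn_id_op_neq0 m (rG : mx_representation F G m) Us
    (cUs : mx_composition_series rG Us) k (i : sG) :
  mx_rsim (series_repr k cUs) (irr_repr i) ->
  gring_op rG (Wedderburn_id i) != 0.
Proof.
move=> /mx_rsim_sym rsim_i; apply/eqP => op0.
have Re := Wedderburn_subring_gring (Wedderburn_id_mem i).
have /eqP := mx_rsim_gring_op0 rsim_i Re (series_gring_op0 cUs k Re op0).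
by rewrite op_Wedderburn_id_pchar // -mxrank_eq0 mxrank1 eqn0Ngt irr_degree_gt0.
Qed.

End Wedderburn.
End GroupRingOp.

Section PermRepStabiliser.
Local Open Scope group_scope.
Local Open Scope ring_scope.
Variables (F : fieldType) (gT : finGroupType) (X : finType).
Variable to : X -> gT -> X.

Lemma basvecJ x g : basvec F x *m permrep_mx F to g = basvec F (to x g).
Proof.
apply/rowP=> j; rewrite !mxE (bigD1 (enum_rank x)) //= !mxE enum_rankK eqxx.
rewrite mul1r big1 ?addr0 ?(eq_sym (enum_val j)) // => k /negbTE nkx.
by rewrite !mxE -(inj_eq enum_rank_inj) enum_valK nkx mul0r.
Qed.

Hypothesis to1 : forall x, to x 1%g = x.
Hypothesis toM : forall x g h, to x (g * h)%g = to (to x g) h.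
Local Notation rP := (permrep F to1 toM).
Local Notation act := (TotalAction to1 toM).

Lemma basvec_stab_sum x :
  basvec F x *m (\sum_(h in 'C[x | act]) rP h)
    = #|'C[x | act]|%:R *: basvec F x.
Proof.
rewrite mulmx_sumr scaler_nat -sumr_const; apply: eq_bigr => h /astab1P /= xh.
by rewrite basvecJ xh.
Qed.

Hypothesis F'G : [pchar F]^'.-group [set: gT].

Lemma permrep_Wedderburn_op0 (sG : irrType F [set: gT]) (i : sG) :
  (forall x, gring_op (irr_repr i) (regular_sum F [set: gT] 'C[x | act]) = 0) ->
  forall A, (A \in Wedderburn_subring i)%MS -> gring_op rP A = 0.
Proof.
move=> opC0 A RiA; apply/row_matrixP => k; rewrite row0 rowE.
have -> : delta_mx 0 k = basvec F (enum_val k).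
  by apply/rowP => j; rewrite !mxE (inj_eq enum_val_inj).
set x := enum_val k; have CG := subsetT 'C[x | act].
have nzC : #|'C[x | act]|%:R != 0 :> F.
  by rewrite -pcharf'_nat; apply: pgroupS CG F'G.
have CA0 := Wedderburn_subring_mulmx0 F'G (regular_sum_gring F CG) (opC0 x) RiA.
rewrite -[basvec F x](scalerK nzC) -basvec_stab_sum.
rewrite -(gring_op_regular_sum _ CG) -scalemxAl -mulmxA -gring_opM.
  by rewrite CA0 linear0 mulmx0 scaler0.
exact: Wedderburn_subring_gring RiA.
Qed.

End PermRepStabiliser.

Section Polytabloid.
Local Open Scope group_scope.
Local Open Scope ring_scope.
Variables (F : fieldType) (d : nat).
Local Notation rho := (tabloid_repr F d).

Lemma tabloid_ofM la (t s : 'S_d) :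
  tab_act (tabloid_of la t) s = tabloid_of la (t * s)%g.
Proof. by apply/ffunP => x; rewrite !ffunE invMg permM. Qed.

Lemma group_set_colstab la : group_set (colstab d la).
Proof.
apply/group_setP; split=> [|s t]; rewrite !inE.
  by apply/forallP => x; rewrite perm1.
move=> /forallP Cs /forallP Ct; apply/forallP => x.
by rewrite permM (eqP (Ct _)) (eqP (Cs _)).
Qed.

Canonical colstab_group la := group (group_set_colstab la).

Lemma polytabloidJ la s : s \in colstab d la ->
  polytabloid F d la *m rho s = (-1) ^+ odd_perm s *: polytabloid F d la.
Proof.
move=> Cs; rewrite /polytabloid mulmx_suml scaler_sumr.
rewrite [RHS](reindex_inj (mulIg s)) /=.
apply: eq_big => [t | t Ct]; first by rewrite groupMr.
rewrite -scalemxAl basvecJ tabloid_ofM scalerA odd_permM signr_addb.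
by rewrite mulrCA -signr_addb addbb mulr1.
Qed.

Hypothesis two_neq0 : 2%:R != 0 :> F.

Lemma polytabloid_sum0 la (H : {group 'S_d}) s :
  s \in colstab d la -> odd_perm s -> s \in H ->
  polytabloid F d la *m (\sum_(h in H) rho h) = 0.
Proof.
move=> Cs odd_s Hs; set S := \sum_(h in H) _.
have sS : rho s *m S = S by apply: repr_mx_sum_group; rewrite ?subsetT.
have /eqP : polytabloid F d la *m S = - (polytabloid F d la *m S).
  by rewrite -{1}sS mulmxA polytabloidJ // odd_s scaleN1r mulNmx.
rewrite -subr_eq0 opprK -mulr2n -scaler_nat scaler_eq0 (negPf two_neq0).
by move/eqP.
Qed.

Lemma Specht_mx_sum0 la (H : {group 'S_d}) :
  (forall x : 'S_d,
     exists2 s, s \in colstab d la & odd_perm s && (s \in H :^ x^-1)) ->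
  Specht_mx F d la *m (\sum_(h in H) rho h) = 0.
Proof.
move=> oddH; apply/row_matrixP => k; rewrite row_mul row0.
have /cyclic_mxP[a /envelop_mxP[c ->] ->] := row_sub k (Specht_mx F d la).
rewrite -mulmxA (mulmx_suml (\sum_(h in H) rho h)) mulmx_sumr big1 // => x _.
rewrite -scalemxAl -scalemxAr repr_mx_sum_conj ?subsetT ?inE // mulmxA.
have [s Cs /andP[odd_s Hxs]] := oddH x.
by rewrite (polytabloid_sum0 Cs odd_s Hxs) mul0mx scaler0.
Qed.

End Polytabloid.

Section TensorStabiliser.
Local Open Scope group_scope.
Variables (n r : nat) (eps : bool).
Local Notation d := (n - eps)%N.
Local Notation widen := (widen_ord (leq_subr eps n)).
Local Notation tensor_action :=
  (TotalAction (@tensor_act1 n r eps) (@tensor_actM n r eps)).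

Lemma ext_perm_id (g : 'S_d) (i : 'I_n) :
  (forall a, widen a = i -> g a = a) -> ext_perm g i = i.
Proof.
rewrite /ext_perm; case: insubP => [a _ a_i fix_i | //].
by apply: val_inj; rewrite /= fix_i //; apply: val_inj.
Qed.

Definition unused_letters (f : tensor_index n r) : {set 'I_d} :=
  [set a | widen a \notin codom f].

Lemma card_unused_letters f : (d - r <= #|unused_letters f|)%N.
Proof.
have : (#|~: unused_letters f| <= r)%N.
  rewrite -[r]card_ord -(size_codom f); apply: (@leq_card_in_seq _ _ widen).
    by move=> a b _ _ [] /val_inj.
  by move=> a; rewrite !inE negbK.
have := cardsC (unused_letters f); rewrite card_ord; lia.
Qed.

Lemma colstab_tperm la (a b : 'I_d) :
  colof la a = colof la b -> tperm a b \in colstab d la.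
Proof.
move=> ab; rewrite inE; apply/forallP => x; apply/eqP.
by case: tpermP => [-> | -> | //]; rewrite ab.
Qed.

Lemma tperm_unused_stab f a b :
  a \in unused_letters f -> b \in unused_letters f ->
  tperm a b \in 'C[f | tensor_action].
Proof.
move=> fa fb; apply/astab1P/ffunP => k /=; rewrite ffunE.
apply: ext_perm_id => c wc; apply: tpermD; [move: fa | move: fb];
  by rewrite inE; apply: contraNneq => ->; rewrite wc codom_f.
Qed.

Lemma odd_colstab_tensor_stab la f :
  is_partition d la -> (head 0%N la < d - r)%N ->
  exists2 s, s \in colstab d la & odd_perm s && (s \in 'C[f | tensor_action]).
Proof.
case/and3P=> sorted_la _ /eqP sum_la lt_head.
have : ~~ dinjectiveb (fun a : 'I_d => colof la a) (unused_letters f).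
  apply: contraL (leq_trans lt_head (card_unused_letters f)).
  move=> /dinjectiveP inj.
  rewrite -leqNgt -(size_iota 0 (head 0%N la)); apply: leq_card_in_seq inj _.
  by move=> a _; rewrite mem_iota colof_lt_head ?sum_la.
case/dinjectivePn => a unused_a [b /andP[/= b_a unused_b] same_col].
exists (tperm a b); first exact: colstab_tperm.
by rewrite odd_tperm eq_sym b_a tperm_unused_stab.
Qed.

End TensorStabiliser.

Section TensorPower.
Local Open Scope group_scope.
Local Open Scope ring_scope.
Variables (F : fieldType) (n r : nat) (eps : bool).
Local Notation d := (n - eps)%N.
Hypothesis F'G : [pchar F]^'.-group [set: 'S_d].
Hypothesis two_neq0 : 2%:R != 0 :> F.

Lemma Phi_Wedderburn_op0 la (sG : irrType F [set: 'S_d]) (i : sG) :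
  is_partition d la -> (head 0%N la < d - r)%N ->
  mx_rsim (irr_repr i) (Specht F d la) ->
  forall A, (A \in Wedderburn_subring i)%MS -> gring_op (Phi F n r eps) A = 0.
Proof.
move=> pla lt_head rsim_i; apply: (permrep_Wedderburn_op0 F'G) => f.
apply: mx_rsim_gring_op0 rsim_i (regular_sum_gring F (subsetT _)) _.
apply: submod_gring_op0; first exact: regular_sum_gring (subsetT _).
rewrite gring_op_regular_sum ?subsetT //; apply: Specht_mx_sum0 => // x.
by rewrite -astab1_act; apply: odd_colstab_tensor_stab.
Qed.

Lemma Phi_comp_factor_head la :
  is_partition d la -> comp_mult_nz (Phi F n r eps) (Specht F d la) ->
  (d - r <= head 0%N la)%N.
Proof.
move=> pla [Us [cUs [_ [k lt_k rsimS]]]]; rewrite leqNgt.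
apply: (socle_exists (regular_repr F [set: 'S_d])) => sG; apply/negP => lt_head.
have rsim_i := rsim_irr_comp_pchar sG F'G (mx_series_repr_irr cUs lt_k).
have rsim_iS := mx_rsim_trans (mx_rsim_sym rsim_i) rsimS.
have := series_Wedderburn_id_op_neq0 F'G rsim_i.
by rewrite (Phi_Wedderburn_op0 pla lt_head rsim_iS) ?Wedderburn_id_mem ?eqxx.
Qed.

End TensorPower.

Theorem proposition5p2 (F : fieldType) (charF0 : [pchar F]%R =i pred0)
    (n r : nat) (eps : bool) :
    (0 < n)%N -> (0 < r)%N -> (r.+1 < n - eps)%N ->
  (* the Specht modules occurring as composition factors of V^{(x) r} *)
  (forall la : seq nat, is_partition (n - eps) la ->
     comp_mult_nz (Phi F n r eps) (Specht F (n - eps) la) ->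
     dominates la (hook (n - eps) r))
  /\
  (* hence the Wedderburn components End(S^la), la not |>= (d-r,1^r), of
     k W_d lie in the kernel of Phi_{n, r + eps} *)
  (forall (sG : irrType F [set: 'S_(n - eps)]) (i : sG) (la : seq nat),
     is_partition (n - eps) la ->
     mx_rsim (irr_repr i) (Specht F (n - eps) la) ->
     ~ dominates la (hook (n - eps) r) ->
     forall A, (A \in Wedderburn_subring i)%MS ->
       gring_op (Phi F n r eps) A = 0%R).
Proof.
move=> _ _ lt_r1_d.
have F'G : ([pchar F]%R^'.-group [set: 'S_(n - eps)])%g.
  by apply/pgroupP => p _ _; rewrite inE /= charF0.
have two_neq0 : (2%:R != 0 :> F)%R by have /pcharf0P -> := charF0.
have le_r_d : (r <= n - eps)%N by lia.
split=> [la pla /(Phi_comp_factor_head F'G two_neq0 pla) | sG i la pla rsim nd].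
  exact: dominates_hook.
apply: (Phi_Wedderburn_op0 F'G two_neq0 pla _ rsim).
by rewrite ltnNge; apply: contra_notN nd; apply: dominates_hook.
Qed.
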